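(* Let $\Gamma$ be a numerical semigroup, $e'\in\Gamma$, and $\Gamma_{e'}=\{0\}\cup(e'+\Gamma)$. For all $m,m'\in\Gamma$, \[ D_{\Gamma_{e'}}(2e'+m,2e'+m')=\big(e'+D_\Gamma(m,m')\big)\cup\{0,2e'+m,2e'+m'\}. \] If in addition $|m-m'|<e'$, this union is disjoint; in particular \[ |D_\Gamma(m,m')|+2\le|D_{\Gamma_{e'}}(2e'+m,2e'+m')|\le|D_\Gamma(m,m')|+3. \]
   Context: A numerical semigroup is a subset of $\mathbb N$ containing $0$, closed under addition, with finite complement. For a numerical semigroup $S$ and $x\in\mathbb Z$, $D_S(x)=\{s\in S:x-s\in S\}$ and $D_S(x_1,x_2)=D_S(x_1)\cup D_S(x_2)$. *)

From mathcomp Require Import all_boot.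
From mathcomp Require Import finmap.
Set Implicit Arguments. Unset Strict Implicit. Unset Printing Implicit Defensive.

Local Open Scope nat_scope.
Definition numerical_semigroup (S : pred nat) : Prop :=
  [/\ S 0,
      (forall a b, S a -> S b -> S (a + b)%N) &
      exists N, forall n, N <= n -> S n ].

(* Since S is a
   subset of N, any such s satisfies 0 <= s <= x, so D_S(x) is a finite set;
   the subtraction below is never truncated on the elements we keep. *)
Definition Dset (S : pred nat) (x : nat) : {fset nat} :=
  [fset s in iota 0 x.+1 | S s && S (x - s)%N]%fset.

Definition Dset2 (S : pred nat) (x1 x2 : nat) : {fset nat} :=
  (Dset S x1 `|` Dset S x2)%fset.

Definition shift_sg (S : pred nat) (e : nat) : pred nat :=
  fun n => (n == 0) || ((e <= n) && S (n - e)%N).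

Definition fshift (e : nat) (A : {fset nat}) : {fset nat} :=
  [fset (e + s)%N | s in A]%fset.

(* An element s of D_{Γ_e}(2e + m) other than 0 and 2e + m must lie in e + Γ
   together with 2e + m - s, i.e. s - e and m - (s - e) lie in Γ; conversely
   0 and 2e + m are always there since 2e + m = e + (e + m) ∈ e + Γ.  Elements of
   e + D_Γ(m, m') lie in [e, e + max m m'], strictly between 0 and
   2e + min m m' when |m - m'| < e, and #{0, 2e + m, 2e + m'} is 2 or 3. *)
From mathcomp Require Import all_boot finmap zify.
Set Implicit Arguments. Unset Strict Implicit. Unset Printing Implicit Defensive.
Local Open Scope nat_scope.

Lemma in_Dset (S : pred nat) (x s : nat) :
  (s \in Dset S x) = [&& s <= x, S s & S (x - s)].
Proof. by rewrite /Dset !inE mem_iota /= add1n ltnS; case: s. Qed.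

Lemma in_fshift (e y : nat) (A : {fset nat}) :
  (y \in fshift e A) = (e <= y) && (y - e \in A).
Proof.
apply/imfsetP/andP => [[s sA ->]|[le_ey yA]]; first by rewrite leq_addr addKn.
by exists (y - e); rewrite ?subnKC.
Qed.

Lemma fshiftU (e : nat) (A B : {fset nat}) :
  fshift e (A `|` B)%fset = (fshift e A `|` fshift e B)%fset.
Proof. exact: imfsetU. Qed.

Lemma card_fshift (e : nat) (A : {fset nat}) : #|` fshift e A| = #|` A|.
Proof. by rewrite card_imfset //; apply: addnI. Qed.

Lemma fshift_Dset_bounds (S : pred nat) (e x y : nat) :
  y \in fshift e (Dset S x) -> e <= y <= e + x.
Proof. by rewrite in_fshift in_Dset => /andP[le_ey /andP[le_y _]]; lia. Qed.

Lemma cardfs3_neq (x a b : nat) :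
  x != a -> x != b -> #|` [fset x; a; b]%fset| = (a != b).+2.
Proof.
move=> xa xb; rewrite -fsetUA cardfsU1 cardfs2 !in_fsetU !in_fset1.
by rewrite (negPf xa) (negPf xb).
Qed.

Section ShiftedSemigroup.

Variables (G : pred nat) (e : nat).
Hypothesis G_add : forall a b, G a -> G b -> G (a + b).
Hypothesis G_e : G e.

Lemma Dset_shift_sg (m : nat) : G m ->
  Dset (shift_sg G e) (2 * e + m) =
    (fshift e (Dset G m) `|` [fset 0; (2 * e + m)%N])%fset.
Proof.
move=> G_m; apply/fsetP => y.
rewrite !in_fsetU in_fshift !in_fset1 !in_Dset /shift_sg.
have G_em : G (2 * e + m - e).
  rewrite (_ : 2 * e + m - e = e + m); [exact: G_add | lia].
have le_ex : e <= 2 * e + m by lia.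
have [->|y0] /= := eqVneq y 0; first by rewrite subn0 G_em le_ex !orbT.
have [{y y0}->|yx] /= := eqVneq y (2 * e + m).
  by rewrite subnn eqxx leqnn G_em le_ex !orbT andbT.
rewrite !orbF; have [le_ey|_] := leqP e y; last by rewrite !andbF.
rewrite (_ : 2 * e + m - y - e = m - (y - e)); last by lia.
by case: (G (y - e)); case: (G (m - (y - e))); rewrite ?andbF ?andbT //=; lia.
Qed.

Lemma Dset2_shift_sg (m m' : nat) : G m -> G m' ->
  Dset2 (shift_sg G e) (2 * e + m) (2 * e + m') =
    (fshift e (Dset2 G m m') `|` [fset 0; (2 * e + m)%N; (2 * e + m')%N])%fset.
Proof.
move=> G_m G_m'; rewrite /Dset2 !Dset_shift_sg // fshiftU.
apply/fsetP => y; rewrite !in_fsetU !in_fset1.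
by case: (y \in fshift e _); case: (y \in fshift e _); case: (y == 0);
  case: (y == 2 * e + m).
Qed.

End ShiftedSemigroup.

Lemma fshift_Dset2_disjoint (S : pred nat) (e m m' : nat) :
  maxn m m' - minn m m' < e ->
  [disjoint fshift e (Dset2 S m m')
           & [fset 0; (2 * e + m)%N; (2 * e + m')%N]]%fset.
Proof.
move=> close; apply/fdisjointP => y.
rewrite /Dset2 fshiftU in_fsetU => /orP[] /fshift_Dset_bounds bounds;
  rewrite !in_fsetU !in_fset1 -orbA; apply/negP; case/or3P => /eqP; lia.
Qed.

Theorem lemma4p3 (G : pred nat) (e m m' : nat) :
  numerical_semigroup G -> G e -> G m -> G m' ->
  Dset2 (shift_sg G e) (2 * e + m) (2 * e + m') =
    (fshift e (Dset2 G m m') `|` [fset 0%N; (2 * e + m)%N; (2 * e + m')%N])%fset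
  /\ (maxn m m' - minn m m' < e ->
      [disjoint fshift e (Dset2 G m m') & [fset 0%N; (2 * e + m)%N; (2 * e + m')%N]]%fset
      /\ #|` Dset2 G m m'| + 2 <= #|` Dset2 (shift_sg G e) (2 * e + m) (2 * e + m')|
      /\ #|` Dset2 (shift_sg G e) (2 * e + m) (2 * e + m')| <= #|` Dset2 G m m'| + 3).
Proof.
case=> _ G_add _ G_e G_m G_m'.
have Deq := Dset2_shift_sg G_add G_e G_m G_m'.
split=> // close; have disj := fshift_Dset2_disjoint G close.
have card3 : #|` [fset 0; (2 * e + m)%N; (2 * e + m')%N]%fset| =
             (2 * e + m != 2 * e + m').+2.
  by apply: cardfs3_neq; apply/eqP; lia.
have cardD : #|` Dset2 (shift_sg G e) (2 * e + m) (2 * e + m')| =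
             #|` Dset2 G m m'| + (2 * e + m != 2 * e + m').+2.
  by rewrite Deq cardfsU (disjoint_fsetI0 disj) cardfs0 subn0 card_fshift card3.
by rewrite cardD; split=> //; lia.
Qed.
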